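(* Let $\mathbf{B}$ be a binomial ring and $n\ge0$. The pure mazes (those with all labels equal to $1$) form a basis of the category $\mathfrak{Laby}_n$; that is, for finite sets $X,Y$, the images of the pure mazes $X\to Y$ having at most $n$ passages form a basis of the $\mathbf{B}$-module $\mathfrak{Laby}_n(X,Y)$.
   Context: Binomial ring: commutative unital, torsion-free, with $\binom ak=a(a-1)\cdots(a-k+1)/k!\in\mathbf{B}$ for all $a\in\mathbf{B}$, $k\ge0$. A passage $p\colon x\to y$ carries label $\overline p\in\mathbf{B}$; a maze $P\colon X\to Y$ between finite sets is a finite multi-set of passages with every element of $X$ a source and every element of $Y$ a target; $|P|$ is the number of passages with multiplicity. $\mathfrak{Laby}$: objects formal finite direct sums of finite sets; $\mathfrak{Laby}(X,Y)$ generated by mazes modulo $P\cup\{x\xrightarrow0y\}=0$ and $P\cup\{x\xrightarrow{a+b}y\}=P\cup\{x\xrightarrow ay\}+P\cup\{x\xrightarrow by\}+P\cup\{x\xrightarrow ay,x\xrightarrow by\}$; composition $P\circ Q=\sum_{U\sqsubseteq P\boxtimes Q}U$ ($U$ a sub-multi-set of composable pairs using every passage occurrence of $P$ and $Q$, read as the maze with passages $x\xrightarrow{\overline p\overline q}z$). $\mathfrak{Laby}_n$ is the quotient of $\mathfrak{Laby}$ by (III) $P=0$ whenever $|P|>n$ and (IV) $P=\sum_d\prod_p\binom{\overline p}{d_p}I_d$, $d$ ranging over assignments $d_p\ge1$ to passage occurrences $p$ of $P$ and $I_d$ the maze with $d_p$ passages from the source to the target of $p$ labelled $1$. *)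

From mathcomp Require Import all_boot all_order all_algebra.
Set Implicit Arguments. Unset Strict Implicit. Unset Printing Implicit Defensive.
Import GRing.Theory.
Local Open Scope ring_scope.

Section Laby.
Variables (B : comPzRingType) (X Y : finType).

Definition passage := ((X * Y) * B)%type.
Definition src (p : passage) : X := p.1.1.
Definition tgt (p : passage) : Y := p.1.2.
Definition lab (p : passage) : B := p.2.

(* A maze X -> Y: a finite multiset of passages (a list, considered up to
   permutation via [delta] below) in which every x is a source and every
   y is a target. *)
Definition is_maze (P : seq passage) : bool :=
  [forall x : X, has (fun p => src p == x) P] &&
  [forall y : Y, has (fun p => tgt p == y) P].

Definition pure (P : seq passage) : bool := all (fun p => lab p == 1) P.

(* The free B-module on mazes is represented by B-valued functions on lists
   of passages; the basis vector of the maze (multiset) P is [delta P]. *)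
Definition delta (P : seq passage) : seq passage -> B :=
  fun N => (perm_eq P N)%:R.

(* I_d : d_p passages labelled 1 from the source to the target of each
   passage occurrence p of P (occurrences = positions in the list). *)
Definition Imaze (P : seq passage) (d : 'I_(size P) -> nat) : seq passage :=
  flatten [seq nseq (d i) ((tnth (in_tuple P) i).1, 1) | i <- enum 'I_(size P)].

Variables (bin : B -> nat -> B) (n : nat).

(* Generating relations (I), (II), (III), (IV) of Laby_n(X,Y).
   In (IV) the sum ranges over d with 1 <= d_p <= n; the omitted terms
   have |I_d| > n and vanish by (III). *)
Inductive laby_rel : (seq passage -> B) -> Prop :=
| relI (P : seq passage) (x : X) (y : Y) :
    is_maze (((x, y), 0) :: P) -> laby_rel (delta (((x, y), 0) :: P))
| relII (P : seq passage) (x : X) (y : Y) (a b : B) :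
    is_maze (((x, y), a) :: P) ->
    laby_rel (fun N => delta (((x, y), a + b) :: P) N
                       - delta (((x, y), a) :: P) N
                       - delta (((x, y), b) :: P) N
                       - delta (((x, y), a) :: ((x, y), b) :: P) N)
| relIII (P : seq passage) :
    is_maze P -> (n < size P)%N -> laby_rel (delta P)
| relIV (P : seq passage) :
    is_maze P ->
    laby_rel (fun N => delta P N -
      \sum_(f : {ffun 'I_(size P) -> 'I_n})
         (\prod_(i < size P) bin (lab (tnth (in_tuple P) i)) (f i).+1)
         * delta (Imaze (fun i => (f i).+1)) N).

(* The B-submodule spanned by the relations; Laby_n(X,Y) is the quotient of
   the free module on mazes X -> Y by it. *)
Inductive laby_span : (seq passage -> B) -> Prop :=
| span0 : laby_span (fun _ => 0)
| spanS (c : B) (g f : seq passage -> B) :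
    laby_rel g -> laby_span f -> laby_span (fun N => c * g N + f N)
| span_ext (f g : seq passage -> B) :
    (forall N, f N = g N) -> laby_span f -> laby_span g.

End Laby.

(* Spanning: relation (IV) rewrites a maze as a combination of pure mazes I_d, and
   (III) kills those with more than n passages.
   Independence: for each monomial m of degree at most n in variables X_e, e in X * Y,
   send a maze P to the coefficient of m in the product over p in P of w(p), the
   truncation at degree n of (1 + X_e)^(lab p) - 1 = sum_(j >= 1) binom(lab p, j) X_e^j.
   This kills (I) since binom(0, j) = 0 for j > 0, (II) since Vandermonde's identity
   makes w(a + b) - w(a) - w(b) - w(a) w(b) divisible by X_e^(n+1), (III) since each
   w(p) is divisible by X_e, and (IV) by expanding the product.  On a pure maze with
   at most n passages it is 1 if m is the monomial of its edges and 0 otherwise, so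
   these functionals are dual to the pure mazes. *)

From HB Require Import structures.
From mathcomp Require Import all_boot all_order all_algebra.
From mathcomp Require Import ring mpoly.
Set Implicit Arguments. Unset Strict Implicit. Unset Printing Implicit Defensive.
Import GRing.Theory.
Local Open Scope ring_scope.

Section LabySpan.
Variables (B : comPzRingType) (X Y : finType) (bin : B -> nat -> B) (n : nat).
Notation span := (@laby_span B X Y bin n).

Lemma laby_span_eq (f g : seq (passage B X Y) -> B) : span f -> f =1 g -> span g.
Proof. by move=> sf fg; apply: span_ext sf. Qed.

Lemma laby_span_rel g : laby_rel bin n g -> span g.
Proof.
move=> r; apply: (laby_span_eq (spanS 1 r (span0 _ _ bin n))) => N.
by rewrite mul1r addr0.
Qed.

Lemma laby_span_add f g : span f -> span g -> span (fun N => f N + g N).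
Proof.
move=> sf sg; elim: sf => [|c g' f' r _ IH|f1 f2 e _ IH].
- by apply: (laby_span_eq sg) => N; rewrite add0r.
- by apply: (laby_span_eq (spanS c r IH)) => N; rewrite addrA.
- by apply: (laby_span_eq IH) => N; rewrite e.
Qed.

Lemma laby_span_scale c f : span f -> span (fun N => c * f N).
Proof.
elim=> [|c' g' f' r _ IH|f1 f2 e _ IH].
- by apply: (laby_span_eq (span0 _ _ bin n)) => N; rewrite mulr0.
- by apply: (laby_span_eq (spanS (c * c') r IH)) => N; rewrite mulrDr mulrA.
- by apply: (laby_span_eq IH) => N; rewrite e.
Qed.

Lemma laby_span_sum (I : eqType) (r : seq I) (F : I -> seq (passage B X Y) -> B) :
  (forall i, i \in r -> span (F i)) -> span (fun N => \sum_(i <- r) F i N).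
Proof.
elim: r => [_|i r IH spanF].
  by apply: (laby_span_eq (span0 _ _ bin n)) => N; rewrite big_nil.
have spanr : span (fun N => \sum_(j <- r) F j N).
  by apply: IH => j jr; apply: spanF; rewrite inE jr orbT.
by apply: (laby_span_eq (laby_span_add (spanF i (mem_head _ _)) spanr)) => N; rewrite big_cons.
Qed.

End LabySpan.

Section Imaze.
Variables (B : comPzRingType) (X Y : finType) (P : seq (passage B X Y)).
Notation occ i := (tnth (in_tuple P) i).

Lemma mem_Imaze (d : 'I_(size P) -> nat) p :
  p \in Imaze d -> exists i, p = ((occ i).1, 1).
Proof.
case/flattenP=> s /mapP [i _ ->].
by rewrite mem_nseq => /andP [_ /eqP ->]; exists i.
Qed.

Lemma Imaze_occ (d : 'I_(size P) -> nat) i :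
  (0 < d i)%N -> ((occ i).1, 1) \in Imaze d.
Proof.
move=> di; apply/flattenP; exists (nseq (d i) ((occ i).1, 1)).
  by apply/mapP; exists i; rewrite ?mem_enum.
by rewrite mem_nseq di eqxx.
Qed.

Lemma Imaze_pure (d : 'I_(size P) -> nat) : pure (Imaze d).
Proof. by apply/allP => p /mem_Imaze [i ->]. Qed.

Lemma Imaze_maze (d : 'I_(size P) -> nat) :
  is_maze P -> (forall i, 0 < d i)%N -> is_maze (Imaze d).
Proof.
move=> /andP [/forallP srcP /forallP tgtP] dpos.
have occ_Imaze p : p \in P -> exists2 p', p' \in Imaze d & p'.1 = p.1.
  move=> pP; have /tnthP [i ->] : p \in in_tuple P by [].
  by exists ((occ i).1, 1); first exact: Imaze_occ.
apply/andP; split; apply/forallP.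
- move=> x; have /hasP [p pP px] := srcP x; have [p' p'I e] := occ_Imaze p pP.
  by apply/hasP; exists p'; rewrite // /src e.
- move=> y; have /hasP [p pP py] := tgtP y; have [p' p'I e] := occ_Imaze p pP.
  by apply/hasP; exists p'; rewrite // /tgt e.
Qed.
End Imaze.

Lemma laby_span_pure (B : comPzRingType) (X Y : finType) (bin : B -> nat -> B) n
    (P : seq (passage B X Y)) :
  is_maze P ->
  exists s : seq (B * seq (passage B X Y)),
    (forall q, q \in s -> [/\ is_maze q.2, pure q.2 & (size q.2 <= n)%N]) /\
    laby_span bin n (fun N => delta P N - \sum_(q <- s) q.1 * delta q.2 N).
Proof.
move=> mP.
pose c (f : {ffun 'I_(size P) -> 'I_n}) :=
  \prod_(i < size P) bin (lab (tnth (in_tuple P) i)) (f i).+1.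
pose I (f : {ffun 'I_(size P) -> 'I_n}) := Imaze (fun i => (f i).+1).
pose small f := (size (I f) <= n)%N.
exists [seq (c f, I f) | f <- [seq f <- index_enum {ffun 'I_(size P) -> 'I_n} | small f]].
split.
  move=> q /mapP [f]; rewrite mem_filter => /andP [sf _] ->.
  by split=> //=; [exact: Imaze_maze | exact: Imaze_pure].
have large : laby_span bin n (fun N =>
    \sum_(f <- [seq f <- index_enum {ffun 'I_(size P) -> 'I_n} | ~~ small f])
      c f * delta (I f) N).
  apply: laby_span_sum => f; rewrite mem_filter => /andP [lf _].
  apply/laby_span_scale/laby_span_rel/relIII; first exact: Imaze_maze.
  by rewrite ltnNge.
apply: (laby_span_eq (laby_span_add (laby_span_rel (relIV bin n mP)) large)) => N.
by rewrite big_map big_filter big_filter (bigID small) /=; ring.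
Qed.

Section FallingFactorial.
Variable R : comPzRingType.

Definition falling (a : R) k := \prod_(i < k) (a - i%:R).

Lemma falling0 a : falling a 0 = 1.
Proof. by rewrite /falling big_ord0. Qed.

Lemma fallingS a k : falling a k.+1 = falling a k * (a - k%:R).
Proof. by rewrite /falling big_ord_recr. Qed.

Lemma fallingD a b k :
  falling (a + b) k = \sum_(i < k.+1) (falling a i * falling b (k - i)) *+ 'C(k, i).
Proof.
elim: k => [|k IH]; first by rewrite big_ord1 !falling0 mulr1.
have split_term (i : 'I_k.+1) :
   (falling a i * falling b (k - i)) *+ 'C(k, i) * (a + b - k%:R) =
   (falling a i.+1 * falling b (k - i)) *+ 'C(k, i)
   + (falling a i * falling b (k.+1 - i)) *+ 'C(k, i).
  have ik : (i <= k)%N by rewrite -ltnS.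
  rewrite -mulrnDl mulrnAl; congr (_ *+ _).
  by rewrite !fallingS subSn // fallingS natrB //; ring.
rewrite fallingS IH mulr_suml (eq_bigr _ (fun i _ => split_term i)) big_split /=.
have -> : \sum_(i < k.+2) falling a i * falling b (k.+1 - i) *+ 'C(k.+1, i) =
   falling b k.+1 + (\sum_(i < k.+1) (falling a i.+1 * falling b (k - i)) *+ 'C(k, i)
   + \sum_(i < k.+1) (falling a i.+1 * falling b (k - i)) *+ 'C(k, i.+1)).
  rewrite big_ord_recl /= subn0 bin0 mulr1n falling0 mul1r -big_split /=.
  congr (_ + _); apply: eq_bigr => i _.
  by rewrite /bump /= add1n subSS binS mulrnDr addrC.
rewrite addrCA; congr (_ + _).
rewrite big_ord_recl /= subn0 bin0 mulr1n falling0 mul1r; congr (_ + _).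
rewrite [in RHS]big_ord_recr /= bin_small // mulr0n addr0.
by apply: eq_bigr => i _; rewrite /bump /= subSS.
Qed.

End FallingFactorial.

Section BinomialRing.
Variables (B : comPzRingType) (bin : B -> nat -> B).
Hypothesis torsion_free : forall (a : B) (k : nat), (0 < k)%N -> a *+ k = 0 -> a = 0.
Hypothesis bin_spec : forall (a : B) (k : nat), bin a k *+ k`! = falling a k.

Lemma mulrn_fact_inj k (a b : B) : a *+ k`! = b *+ k`! -> a = b.
Proof.
move=> e; apply/eqP; rewrite -subr_eq0; apply/eqP.
by apply: (torsion_free (fact_gt0 k)); rewrite mulrnBl e subrr.
Qed.

Lemma binR0 a : bin a 0 = 1.
Proof. by have := bin_spec a 0; rewrite falling0 mulr1n. Qed.

Lemma binR0S k : bin 0 k.+1 = 0.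
Proof.
apply: (@mulrn_fact_inj k.+1); rewrite bin_spec mul0rn /falling big_ord_recl /=.
by rewrite subrr mul0r.
Qed.

Lemma binR11 : bin 1 1 = 1.
Proof. by have := bin_spec 1 1; rewrite /falling big_ord1 subr0 /= mulr1n. Qed.

Lemma binR1SS k : bin 1 k.+2 = 0.
Proof.
apply: (@mulrn_fact_inj k.+2).
rewrite bin_spec mul0rn /falling big_ord_recl big_ord_recl /=.
by rewrite subrr mul0r mulr0.
Qed.

Lemma binRD a b k : bin (a + b) k = \sum_(i < k.+1) bin a i * bin b (k - i).
Proof.
apply: (@mulrn_fact_inj k); rewrite bin_spec fallingD -sumrMnl.
apply: eq_bigr => i _; have ik : (i <= k)%N by rewrite -ltnS.
rewrite -(bin_fact ik) [in RHS]mulnC mulrnA; congr (_ *+ _).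
by rewrite mulrnA -mulrnAl -mulrnAr !bin_spec.
Qed.

End BinomialRing.

Section Pairing.
Variables (B : comPzRingType) (X Y : finType).
Notation maze := (seq (passage B X Y)).

Definition comb (L : seq (B * maze)) : maze -> B :=
  fun N => \sum_(q <- L) q.1 * delta q.2 N.

Variable Psi : maze -> B.
Hypothesis Psi_perm : forall P P', perm_eq P P' -> Psi P = Psi P'.

Definition pairing (L : seq (B * maze)) := \sum_(q <- L) q.1 * Psi q.2.

Lemma pairing_eq0 L : comb L =1 (fun _ => 0) -> pairing L = 0.
Proof.
have [k] := ubnP (size L); elim: k L => // k IH [|q0 L] szL L0.
  by rewrite /pairing big_nil.
pose like (q : B * maze) := perm_eq q0.2 q.2.
have delta_like q N : like q -> delta q.2 N = delta q0.2 N.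
  by move=> /permPl e; rewrite /delta e.
have Psi_like q : like q -> Psi q.2 = Psi q0.2.
  by move=> e; rewrite (Psi_perm e).
have q0_cancel : q0.1 + \sum_(q <- L | like q) q.1 = 0.
  have := L0 q0.2; rewrite /comb big_cons /delta perm_refl mulr1 (bigID like) /=.
  rewrite [X in _ + (_ + X)]big1 ?addr0 => [|q /negbTE nq]; last first.
    by rewrite perm_sym (nq : perm_eq q0.2 q.2 = false) mulr0.
  rewrite (eq_bigr (fun q => q.1)) // => q lq.
  by rewrite perm_sym (lq : perm_eq q0.2 q.2) mulr1.
have drop_like (F : maze -> B) : (forall q, like q -> F q.2 = F q0.2) ->
    \sum_(q <- q0 :: L) q.1 * F q.2 = \sum_(q <- L | ~~ like q) q.1 * F q.2.
  move=> FE; rewrite big_cons (bigID like) /= addrA.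
  rewrite (eq_bigr _ (fun q lq => congr1 _ (FE q lq))).
  by rewrite -mulr_suml -mulrDl q0_cancel mul0r add0r.
rewrite /pairing (drop_like Psi Psi_like) -big_filter; apply: IH.
  by rewrite size_filter (leq_ltn_trans (count_size _ _)) // -ltnS.
move=> N; rewrite /comb big_filter -(drop_like (fun P => delta P N)); first exact: L0.
by move=> q; exact: delta_like.
Qed.

Lemma pairing_comb_eq L1 L2 : comb L1 =1 comb L2 -> pairing L1 = pairing L2.
Proof.
move=> eL; apply/eqP; rewrite -subr_eq0; apply/eqP.
have := @pairing_eq0 (L1 ++ [seq (- q.1, q.2) | q <- L2]).
rewrite /pairing big_cat big_map /= (eq_bigr _ (fun q _ => mulNr q.1 (Psi q.2))) sumrN.
apply=> N; move: (eL N); rewrite /comb big_cat big_map /=.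
by rewrite (eq_bigr _ (fun q _ => mulNr q.1 (delta q.2 N))) sumrN => ->; rewrite subrr.
Qed.

Variables (bin : B -> nat -> B) (n : nat).
Hypothesis Psi_rel : forall g, laby_rel bin n g ->
  exists L, g =1 comb L /\ pairing L = 0.

Lemma laby_span_pairing f L : laby_span bin n f -> f =1 comb L -> pairing L = 0.
Proof.
move=> sf fL; suff [L' [fL' L'0]] : exists L', f =1 comb L' /\ pairing L' = 0.
  by rewrite -L'0; apply: pairing_comb_eq => N; rewrite -fL -fL'.
elim: sf {L fL} => [|c g f' /Psi_rel [L [gL L0]] _ [L' [fL' L'0]]|f1 f2 e _ [L [fL L0]]].
- by exists [::]; split => [N|]; rewrite /comb /pairing big_nil.
- exists ([seq (c * q.1, q.2) | q <- L] ++ L'); split => [N|].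
    rewrite /comb big_cat big_map /= gL fL' /comb mulr_sumr.
    by congr (_ + _); apply: eq_bigr => q _; rewrite mulrA.
  rewrite /pairing big_cat big_map /= -/(pairing L') L'0 addr0.
  rewrite (eq_bigr _ (fun q _ => esym (mulrA c q.1 (Psi q.2)))) -mulr_sumr.
  by rewrite -/(pairing L) L0 mulr0.
- by exists L; split => // N; rewrite -e.
Qed.

End Pairing.

Lemma mcoeff_mulX_eq0 (R : ringType) k (u m : 'X_{1..k}) (G : {mpoly R[k]}) :
  (mdeg m < mdeg u)%N -> ('X_[u] * G)@_m = 0.
Proof.
move=> lt_mu; rewrite mcoeffM big1 // => v /eqP m_uv.
rewrite mcoeffX; case: eqP => [uv|]; last by rewrite mul0r.
have : (mdeg u <= mdeg m)%N by rewrite (congr1 mdeg m_uv) mdegD -uv leq_addr.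
by rewrite leqNgt lt_mu.
Qed.

(* Multivariate polynomials need a nontrivial coefficient ring; over the zero
   ring independence is trivial. *)
Definition nonzero_ring (B : comPzRingType) of (1 : B) != 0 : Type := B.
HB.instance Definition _ B h := GRing.ComPzRing.on (@nonzero_ring B h).
HB.instance Definition _ B h := GRing.PzSemiRing_isNonZero.Build (@nonzero_ring B h) h.

Section CoefficientFunctionals.
Variables (B : comPzRingType) (B_nontrivial : (1 : B) != 0).
Variables (X Y : finType) (bin : B -> nat -> B) (n : nat).
Hypothesis torsion_free : forall (a : B) (k : nat), (0 < k)%N -> a *+ k = 0 -> a = 0.
Hypothesis bin_spec : forall (a : B) (k : nat), bin a k *+ k`! = falling a k.
Notation R := (nonzero_ring B_nontrivial).
Notation maze := (seq (passage B X Y)).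
Notation K := #|{: X * Y}|.
Notation MP := {mpoly R[K]}.

Definition edge_var (e : X * Y) : 'I_K := enum_rank e.

Definition trunc_binom (a : B) : {poly R} := \poly_(j < n.+1) (bin a j : R).

Definition edge_eval (e : X * Y) (p : {poly R}) : MP :=
  (map_poly (@mpolyC K R) p).['X_(edge_var e)].

(* the truncation at degree [n] of [(1 + X_e)^a - 1] *)
Definition passage_weight (p : passage B X Y) : MP :=
  \sum_(j < n) (bin (lab p) j.+1 : R) *: 'X_(edge_var p.1) ^+ j.+1.

Definition maze_coef (m : 'X_{1..K}) (P : maze) : R :=
  (\prod_(p <- P) passage_weight p)@_m.

Lemma passage_weight0 e : passage_weight (e, 0) = 0.
Proof.
by rewrite /passage_weight big1 // => j _; rewrite /lab binR0S // scale0r.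
Qed.

Lemma passage_weight1 e : (0 < n)%N -> passage_weight (e, 1) = 'X_(edge_var e).
Proof.
rewrite /passage_weight; case: n => // k _.
rewrite big_ord_recl /= binR11 // scale1r expr1 big1 ?addr0 // => j _.
by rewrite /lab /= binR1SS // scale0r.
Qed.

Lemma passage_weightE p :
  passage_weight p =
  'X_(edge_var p.1) * \sum_(j < n) (bin (lab p) j.+1 : R) *: 'X_(edge_var p.1) ^+ j.
Proof.
by rewrite mulr_sumr; apply: eq_bigr => j _; rewrite exprS scalerAr.
Qed.

Lemma passage_weight_edge_eval p :
  passage_weight p = edge_eval p.1 (trunc_binom (lab p) - 1).
Proof.
have mpolyC_inj : injective (fun c : R => c%:MP : MP).
  by move=> c1 c2 /eqP; rewrite mpolyC_eq => /eqP.
rewrite /edge_eval (horner_coef_wide _ (n := n.+1)); last first.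
  rewrite (size_map_inj_poly mpolyC_inj (mpolyC0 _ _)).
  by rewrite (leq_trans (size_polyD _ _)) // geq_max size_polyN size_poly size_poly1.
rewrite big_ord_recl coef_map /= coefB coefC /trunc_binom coef_poly /=.
rewrite binR0 // subrr mpolyC0 mul0r add0r /passage_weight.
apply: eq_bigr => j _; rewrite coef_map /= coefB coefC coef_poly.
by rewrite /bump /= add1n ltnS ltn_ord subr0 mul_mpolyC.
Qed.

Lemma trunc_binomD a b : exists q : {poly R},
  trunc_binom (a + b) - trunc_binom a * trunc_binom b = q * 'X^(n.+1).
Proof.
set d := _ - _; exists (drop_poly n.+1 d); rewrite -[LHS](poly_take_drop n.+1).
suff -> : take_poly n.+1 d = 0 by rewrite add0r.
apply/polyP => i; rewrite coef_take_poly coef0; case: ltnP => // i_le_n.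
rewrite coefB coefM /trunc_binom coef_poly i_le_n binRD //.
apply/eqP; rewrite subr_eq0; apply/eqP; apply: eq_bigr => j _.
have j_le_i : (j <= i)%N by rewrite -ltnS.
by rewrite !coef_poly (leq_ltn_trans j_le_i i_le_n) (leq_ltn_trans (leq_subr _ _) i_le_n).
Qed.

Lemma passage_weight_split e a b : exists G : MP,
  passage_weight (e, a + b) - passage_weight (e, a) - passage_weight (e, b)
    - passage_weight (e, a) * passage_weight (e, b) =
  'X_[U_(edge_var e) *+ n.+1] * G.
Proof.
have [q dq] := trunc_binomD a b.
exists (edge_eval e q); rewrite !passage_weight_edge_eval /= -mpolyXn.
transitivity (edge_eval e (q * 'X^(n.+1))).
  by rewrite -dq /edge_eval !(rmorphB, rmorphM, rmorph1) /= !hornerE; ring.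
by rewrite /edge_eval rmorphM /= hornerM rmorphXn /= map_polyX hornerXn mulrC.
Qed.

Lemma maze_coef_perm m (P P' : maze) : perm_eq P P' -> maze_coef m P = maze_coef m P'.
Proof. by move=> pP; rewrite /maze_coef (perm_big _ pP). Qed.

Lemma maze_coef_label0 m x y (P : maze) : maze_coef m (((x, y), 0) :: P) = 0.
Proof. by rewrite /maze_coef big_cons passage_weight0 mul0r mcoeff0. Qed.

Lemma maze_coef_labelD m x y (a b : B) (P : maze) : (mdeg m <= n)%N ->
  maze_coef m (((x, y), a + b) :: P) - maze_coef m (((x, y), a) :: P)
  - maze_coef m (((x, y), b) :: P) - maze_coef m (((x, y), a) :: ((x, y), b) :: P) = 0.
Proof.
move=> dm; rewrite /maze_coef !big_cons -!mcoeffB.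
have [G dG] := passage_weight_split (x, y) a b.
set w := passage_weight; set H := \prod_(p <- P) w p.
have -> : w (x, y, a + b) * H - w (x, y, a) * H - w (x, y, b) * H
    - w (x, y, a) * (w (x, y, b) * H)
  = (w (x, y, a + b) - w (x, y, a) - w (x, y, b) - w (x, y, a) * w (x, y, b)) * H.
  by ring.
by rewrite dG -mulrA mcoeff_mulX_eq0 // mdegMn mdeg1 mul1n ltnS.
Qed.

Definition maze_mnm (r : maze) : 'X_{1..K} := (\sum_(p <- r) U_(edge_var p.1))%MM.

Lemma prod_edge_var (r : maze) :
  \prod_(p <- r) 'X_(edge_var p.1) = 'X_[maze_mnm r] :> MP.
Proof.
rewrite /maze_mnm; elim: r => [|p r IH]; first by rewrite !big_nil mpolyX0.
by rewrite !big_cons IH mpolyXD.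
Qed.

Lemma mdeg_maze_mnm r : mdeg (maze_mnm r) = size r.
Proof.
rewrite /maze_mnm mdeg_sum (eq_bigr (fun _ => 1%N)) => [|p _]; last exact: mdeg1.
by rewrite sum1_size.
Qed.

Lemma maze_coef_large m (P : maze) : (mdeg m <= n)%N -> (n < size P)%N ->
  maze_coef m P = 0.
Proof.
move=> dm sP; rewrite /maze_coef (eq_bigr _ (fun p _ => passage_weightE p)) big_split /=.
by rewrite prod_edge_var mcoeff_mulX_eq0 // mdeg_maze_mnm (leq_ltn_trans dm).
Qed.

Lemma prod_Imaze (P : maze) (d : 'I_(size P) -> nat) (F : passage B X Y -> MP) :
  \prod_(p <- Imaze d) F p = \prod_(i < size P) F ((tnth (in_tuple P) i).1, 1) ^+ d i.
Proof.
rewrite /Imaze big_flatten big_map /= big_enum /=.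
by apply: eq_bigr => i _; rewrite big_nseq iter_mulr_1.
Qed.

Lemma maze_coef_expand m (P : maze) :
  maze_coef m P = \sum_(f : {ffun 'I_(size P) -> 'I_n})
    (\prod_(i < size P) bin (lab (tnth (in_tuple P) i)) (f i).+1)
      * maze_coef m (Imaze (fun i => (f i).+1)).
Proof.
rewrite /maze_coef big_tnth /passage_weight bigA_distr_bigA /=.
rewrite (big_morph (mcoeff m) (@mcoeffD _ R m) (@mcoeff0 _ R m)).
apply: eq_bigr => f _; rewrite scaler_prod mcoeffZ prod_Imaze; congr (_ * _@__).
apply: eq_bigr => i _; rewrite -/(passage_weight ((tnth (in_tuple P) i).1, 1)).
by rewrite passage_weight1 //; case: (f i) => j; case: (n).
Qed.

Lemma maze_coef_pure m (r : maze) : pure r -> (size r <= n)%N ->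
  maze_coef m r = (maze_mnm r == m)%:R.
Proof.
move=> /allP pr sr; rewrite /maze_coef -mcoeffX -prod_edge_var.
congr (_@__); apply: eq_big_seq => p pr_p.
have /eqP lp := pr p pr_p; case: p lp pr_p => e a /= -> pr_p.
by rewrite passage_weight1 //; apply: leq_trans sr; case: (r) pr_p.
Qed.

Lemma maze_coef_rel m g : (mdeg m <= n)%N -> laby_rel bin n g ->
  exists L, g =1 comb L /\ pairing (maze_coef m) L = 0.
Proof.
move=> dm [P x y _|P x y a b _|P _ sP|P _].
- exists [:: (1, ((x, y), 0) :: P)].
  by split=> [N|]; rewrite /comb /pairing big_seq1 mul1r ?maze_coef_label0.
- exists [:: (1, ((x, y), a + b) :: P); (-1, ((x, y), a) :: P);
           (-1, ((x, y), b) :: P); (-1, ((x, y), a) :: ((x, y), b) :: P)].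
  split=> [N|]; rewrite /comb /pairing !big_cons big_nil /=; first by ring.
  by rewrite -[RHS](@maze_coef_labelD m x y a b P dm); ring.
- exists [:: (1, P)].
  by split=> [N|]; rewrite /comb /pairing big_seq1 mul1r ?maze_coef_large.
- pose c (f : {ffun 'I_(size P) -> 'I_n}) :=
    \prod_(i < size P) bin (lab (tnth (in_tuple P) i)) (f i).+1.
  exists ((1, P) :: [seq (- c f, Imaze (fun i => (f i).+1)) | f <- index_enum _]).
  split=> [N|]; rewrite /comb /pairing big_cons big_map /= mul1r.
    by rewrite -sumrN; congr (_ + _); apply: eq_bigr => f _; rewrite mulNr.
  rewrite maze_coef_expand -big_split /= big1 // => f _.
  by rewrite mulNr subrr.
Qed.

Lemma perm_eq_maze_mnm (r1 r2 : maze) :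
  pure r1 -> pure r2 -> maze_mnm r1 = maze_mnm r2 -> perm_eq r1 r2.
Proof.
have count_mnm r p : pure r -> lab p = 1 -> count_mem p r = maze_mnm r (edge_var p.1).
  move=> /allP pr lp; rewrite /maze_mnm mnm_sumE -sum1_count big_mkcond /=.
  apply: eq_big_seq => p' pr_p'; rewrite mnm1E (inj_eq enum_rank_inj).
  have /eqP lp' := pr p' pr_p'; case: p' lp' pr_p' => e' a' /= -> _.
  by case: p lp => e a /= ->; rewrite xpair_eqE eqxx andbT.
move=> pr1 pr2 e; apply/allP => p p_in; apply/eqP.
have lp : lab p = 1.
  by move: p_in; rewrite mem_cat => /orP [/(allP pr1)|/(allP pr2)] /eqP.
by rewrite !count_mnm // e.
Qed.

Lemma pairing_maze_coef_pure (s : seq (B * maze)) q0 :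
  (forall q, q \in s -> pure q.2 /\ (size q.2 <= n)%N) ->
  pairwise (fun q r : B * maze => ~~ perm_eq q.2 r.2) s -> q0 \in s ->
  pairing (maze_coef (maze_mnm q0.2)) s = q0.1.
Proof.
elim: s => // r s IH spure /= /andP [/allP r_s pw_s].
have [pr sr] := spure r (mem_head _ _).
have {}spure q : q \in s -> pure q.2 /\ (size q.2 <= n)%N.
  by move=> qs; apply: spure; rewrite inE qs orbT.
have apart q : q \in s -> (maze_mnm r.2 == maze_mnm q.2) = false.
  move=> qs; apply/eqP => e; have [pq _] := spure q qs.
  by have := r_s q qs; rewrite perm_eq_maze_mnm.
rewrite inE /pairing big_cons => /orP [/eqP ->|q0s].
  rewrite maze_coef_pure // eqxx mulr1 big1_seq ?addr0 // => q /andP [_ qs].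
  by have [pq sq] := spure q qs; rewrite maze_coef_pure // eq_sym apart // mulr0.
by rewrite maze_coef_pure // apart // mulr0 add0r; apply: IH.
Qed.

Lemma pure_mazes_free (s : seq (B * maze)) :
  (forall q, q \in s -> [/\ is_maze q.2, pure q.2 & (size q.2 <= n)%N]) ->
  pairwise (fun q r : B * maze => ~~ perm_eq q.2 r.2) s ->
  laby_span bin n (comb s) -> forall q, q \in s -> q.1 = 0.
Proof.
move=> smaze pw sp q0 q0s.
have spure q : q \in s -> pure q.2 /\ (size q.2 <= n)%N by case/smaze.
rewrite -(pairing_maze_coef_pure spure pw q0s).
have dm : (mdeg (maze_mnm q0.2) <= n)%N by rewrite mdeg_maze_mnm; case: (spure _ q0s).
apply: (laby_span_pairing (@maze_coef_perm _) _ sp) => // g.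
exact: maze_coef_rel.
Qed.

End CoefficientFunctionals.

Theorem mainTheorem12 (B : comPzRingType) (bin : B -> nat -> B)
  (torsion_free : forall (a : B) (k : nat), (0 < k)%N -> a *+ k = 0 -> a = 0)
  (bin_spec : forall (a : B) (k : nat),
      bin a k *+ k`! = \prod_(i < k) (a - i%:R))
  (n : nat) (X Y : finType) :
  (forall P : seq (passage B X Y), is_maze P ->
     exists s : seq (B * seq (passage B X Y)),
       (forall q, q \in s -> [/\ is_maze q.2, pure q.2 & (size q.2 <= n)%N]) /\
       laby_span bin n (fun N => delta P N - \sum_(q <- s) q.1 * delta q.2 N))
  /\
  (forall s : seq (B * seq (passage B X Y)),
     (forall q, q \in s -> [/\ is_maze q.2, pure q.2 & (size q.2 <= n)%N]) ->
     pairwise (fun q r : B * seq (passage B X Y) => ~~ perm_eq q.2 r.2) s ->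
     laby_span bin n (fun N => \sum_(q <- s) q.1 * delta q.2 N) ->
     forall q, q \in s -> q.1 = 0).
Proof.
split; first exact: laby_span_pure.
have [B_trivial|B_nontrivial] := eqVneq (1 : B) 0.
  by move=> s _ _ _ q _; rewrite -[q.1]mulr1 B_trivial mulr0.
exact: pure_mazes_free.
Qed.
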